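(* There exist absolute constants $0<C_0<1/4$, $c>0$ and $N_0>0$ such that the following holds. Let $P$ be a set of $n$ points in $\mathbb{R}^2$ in general position, let $0<\epsilon<1$ with $\epsilon n\ge N_0$, let $0<\sigma\le 1$, let $r_0\ge 1$ be an integer, let $\Pi\subseteq\binom{P}{2}$, and put $\epsilon_0:=\sigma\epsilon/(100 r_0)$. Let $K$ be a convex set that is $(\epsilon,\sigma/2)$-restricted to $(P,\Pi)$, with witness set $P_K$ and $\Pi_K=\binom{P_K}{2}\cap\Pi$, and suppose that $K$ is not $(C_0\sigma\epsilon)$-crowded in $\Lambda(r_0)$. Then there is a slab $\tau\in\Lambda(r_0)$ (a middle slab for $K$) such that (M1) $\epsilon_0 n\le |P_K\cap\tau|\le C_0\sigma\epsilon n$, and (M2) at least $c\,\sigma\epsilon^2n^2/r_0$ edges of $\Pi_K$ cross $\tau$ transversally.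
   Context: General position: no three points of $P$ are collinear and no two lie on a common vertical line. $\binom{P}{2}$ denotes the set of segments spanned by pairs of points of $P$. A convex set $K$ is $(\epsilon,\sigma)$-restricted to $(P,\Pi)$ if $P\cap K$ contains a subset $P_K$ of exactly $\lceil\epsilon n\rceil$ points such that $\binom{P_K}{2}\cap\Pi$ contains at least $\sigma\binom{\lceil \epsilon n\rceil}{2}$ edges (one such $P_K$ is fixed as the witness set). For an integer $r\ge1$, ${\cal Y}(r)$ is a set of $r$ vertical lines, none through a point of $P$, such that each of the $r+1$ open vertical slabs of $\mathbb{R}^2\setminus\bigcup{\cal Y}(r)$ contains between $\lfloor n/(r+1)\rfloor$ and $\lceil n/(r+1)\rceil$ points of $P$; $\Lambda(r)$ is the collection of these slabs. $K$ is $\epsilon'$-crowded in $\Lambda(r)$ if some slab of $\Lambda(r)$ contains at least $\epsilon' n$ points of $P\cap K$. An edge $pq$ crosses a slab $\tau$ transversally if the segment $pq$ meets $\tau$ and neither $p$ nor $q$ lies in $\tau$. *)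

From Stdlib Require Import Reals Lra Lia List Classical ClassicalEpsilon.
Import ListNotations.
Open Scope R_scope.

Definition point : Type := (R * R)%type.

Definition ceilZ (x : R) : Z := (- Int_part (- x))%Z.
Definition ceil_nat (x : R) : nat := Z.to_nat (ceilZ x).

Definition decP (Q : Prop) : bool :=
  if excluded_middle_informative Q then true else false.

Definition pcount (Q : point -> Prop) (s : list point) : nat :=
  length (filter (fun p => decP (Q p)) s).

Fixpoint pair_count (Q : point -> point -> Prop) (s : list point) : nat :=
  match s with
  | [] => 0%nat
  | x :: s' => (pcount (Q x) s' + pair_count Q s')%nat
  end.

Definition collinear (p q r : point) : Prop :=
  (fst q - fst p) * (snd r - snd p) - (snd q - snd p) * (fst r - fst p) = 0.

Definition general_position (P : list point) : Prop :=
  (forall p q r, In p P -> In q P -> In r P -> p <> q -> q <> r -> p <> r ->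
     ~ collinear p q r) /\
  (forall p q, In p P -> In q P -> p <> q -> fst p <> fst q).

Definition convex (K : point -> Prop) : Prop :=
  forall p q t, K p -> K q -> 0 <= t <= 1 ->
    K ((1 - t) * fst p + t * fst q, (1 - t) * snd p + t * snd q).

Definition binom2 (k : nat) : R := INR k * (INR k - 1) / 2.

Definition restricted_witness (P : list point) (Pi : point -> point -> Prop)
    (K : point -> Prop) (eps sigma : R) (PK : list point) : Prop :=
  let k := ceil_nat (eps * INR (length P)) in
  NoDup PK /\ incl PK P /\ (forall p, In p PK -> K p) /\
  length PK = k /\
  INR (pair_count Pi PK) >= sigma * binom2 k.

(* Y(r): the list ys of r vertical lines x = ys_0 < ... < ys_(r-1) *)
(* slab i (0 <= i <= r) is the open strip between line i-1 and line i *)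
Definition in_slab (ys : list R) (i : nat) (p : point) : Prop :=
  (i = 0%nat \/ nth (i - 1) ys 0 < fst p) /\
  (i = length ys \/ fst p < nth i ys 0).

Definition slab_system (P : list point) (r : nat) (ys : list R) : Prop :=
  length ys = r /\
  (forall i, (i + 1 < r)%nat -> nth i ys 0 < nth (i + 1) ys 0) /\
  (forall p y, In p P -> In y ys -> fst p <> y) /\
  (forall i, (i <= r)%nat ->
     (length P / (r + 1) <= pcount (in_slab ys i) P <=
      (length P + r) / (r + 1))%nat).

Definition crowded (P : list point) (ys : list R) (K : point -> Prop) (eps' : R) : Prop :=
  exists i, (i <= length ys)%nat /\
    exists L : list point, NoDup L /\ incl L P /\
      (forall p, In p L -> K p /\ in_slab ys i p) /\
      INR (length L) >= eps' * INR (length P).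

Definition crosses (ys : list R) (i : nat) (p q : point) : Prop :=
  (exists t, 0 <= t <= 1 /\
     in_slab ys i ((1 - t) * fst p + t * fst q, (1 - t) * snd p + t * snd q)) /\
  ~ in_slab ys i p /\ ~ in_slab ys i q.

(* Call a slab heavy if it contains at least eps0 n points of P_K; since K is not crowded,
   every slab contains at most C0 sigma eps n of them.  Suppose no heavy slab is crossed
   transversally by many edges of Pi_K.  Every edge of Pi_K then has an endpoint in a light
   slab, or joins two heavy slabs with no heavy slab between them, or crosses a heavy slab
   transversally.  The first kind number at most 2 (r0 + 1) eps0 n |P_K|, the second at most
   3 C0 sigma eps n |P_K| (a point sees only its own slab and the nearest heavy slab on each
   side), the third at most (r0 + 1) c sigma eps^2 n^2 / r0.  With C0 = c = 1/100 and
   eps n >= 100 this is less than (sigma / 2) binom(|P_K|, 2), contradicting the restriction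
   of K. *)

From Stdlib Require Import Reals List Lra Lia Classical ClassicalEpsilon Psatz ZArith.
Open Scope R_scope.

Lemma decPE (Q : Prop) : decP Q = true <-> Q.
Proof.
  unfold decP; destruct (excluded_middle_informative Q); split; auto; discriminate.
Qed.

Lemma pcount_cons_in (Q : point -> Prop) x s : Q x -> pcount Q (x :: s) = S (pcount Q s).
Proof. intro Hx; unfold pcount; simpl; now rewrite (proj2 (decPE _) Hx). Qed.

Lemma pcount_cons_out (Q : point -> Prop) x s : ~ Q x -> pcount Q (x :: s) = pcount Q s.
Proof.
  intro Hx; unfold pcount; simpl.
  destruct (decP (Q x)) eqn:E; [now apply (proj1 (decPE _)) in E | reflexivity].
Qed.

Lemma pcount_cons_le (Q : point -> Prop) x s :
  (pcount Q s <= pcount Q (x :: s) <= S (pcount Q s))%nat.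
Proof.
  destruct (classic (Q x)); [rewrite pcount_cons_in | rewrite pcount_cons_out]; auto; lia.
Qed.

Lemma pcount_le_length Q s : (pcount Q s <= length s)%nat.
Proof. apply filter_length_le. Qed.

Lemma pcount_mono (Q1 Q2 : point -> Prop) s :
  (forall x, In x s -> Q1 x -> Q2 x) -> (pcount Q1 s <= pcount Q2 s)%nat.
Proof.
  induction s as [|x s IH]; intros H; [cbn; lia|].
  specialize (IH (fun y Hy => H y (or_intror Hy))).
  destruct (classic (Q1 x)) as [h|h].
  - rewrite (pcount_cons_in Q1 _ _ h), (pcount_cons_in Q2) by (apply H; [now left | exact h]).
    lia.
  - rewrite (pcount_cons_out Q1) by auto; pose proof (pcount_cons_le Q2 x s); lia.
Qed.

Lemma pcount_eq0 (Q : point -> Prop) s : (forall x, In x s -> ~ Q x) -> pcount Q s = 0%nat.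
Proof.
  induction s as [|x s IH]; intro H; [reflexivity|].
  rewrite pcount_cons_out by (apply H; now left).
  apply IH; intros y Hy; apply H; now right.
Qed.

Lemma pcount_or Q1 Q2 s :
  (pcount (fun x => Q1 x \/ Q2 x) s <= pcount Q1 s + pcount Q2 s)%nat.
Proof.
  induction s as [|x s IH]; [cbn; lia|].
  destruct (classic (Q1 x)), (classic (Q2 x));
    repeat first [rewrite (pcount_cons_in (fun x => Q1 x \/ Q2 x)) by tauto
                 | rewrite (pcount_cons_out (fun x => Q1 x \/ Q2 x)) by tauto
                 | rewrite (pcount_cons_in Q1) by tauto | rewrite (pcount_cons_out Q1) by tauto
                 | rewrite (pcount_cons_in Q2) by tauto | rewrite (pcount_cons_out Q2) by tauto];
    lia.
Qed.

Lemma pcount_exists_le (Q : nat -> point -> Prop) s r m :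
  (forall j, (j <= r)%nat -> INR (pcount (Q j) s) <= m) ->
  INR (pcount (fun x => exists j, (j <= r)%nat /\ Q j x) s) <= (INR r + 1) * m.
Proof.
  induction r as [|r IH]; intro H.
  - eapply Rle_trans; [apply le_INR, pcount_mono | rewrite Rplus_0_l, Rmult_1_l; now apply H].
    intros x _ [j [Hj HQ]]; now replace j with 0%nat in HQ by lia.
  - assert (Hle : (pcount (fun x => exists j, (j <= S r)%nat /\ Q j x) s <=
                   pcount (Q (S r)) s + pcount (fun x => exists j, (j <= r)%nat /\ Q j x) s)%nat).
    { eapply Nat.le_trans; [apply pcount_mono | apply pcount_or].
      intros x _ [j [Hj HQ]]; destruct (Nat.eq_dec j (S r)) as [->|]; [now left|].
      right; exists j; split; [lia | exact HQ]. }
    apply le_INR in Hle; rewrite plus_INR in Hle.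
    specialize (IH (fun j Hj => H j (le_S _ _ Hj))); specialize (H (S r) (le_n _)).
    rewrite S_INR; lra.
Qed.

Lemma pair_count_mono (Q1 Q2 : point -> point -> Prop) s :
  (forall x y, In x s -> In y s -> Q1 x y -> Q2 x y) ->
  (pair_count Q1 s <= pair_count Q2 s)%nat.
Proof.
  induction s as [|x s IH]; intros H; [cbn; lia|]; simpl.
  specialize (IH (fun a b Ha Hb => H a b (or_intror Ha) (or_intror Hb))).
  enough (pcount (Q1 x) s <= pcount (Q2 x) s)%nat by lia.
  apply pcount_mono; intros y Hy; apply H; simpl; auto.
Qed.

Lemma pair_count_eq0 (Q : point -> point -> Prop) s :
  (forall x y, In x s -> In y s -> ~ Q x y) -> pair_count Q s = 0%nat.
Proof.
  induction s as [|x s IH]; intro H; [reflexivity|]; simpl.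
  rewrite pcount_eq0, IH; [reflexivity | |].
  - intros a b Ha Hb; apply H; now right.
  - intros y Hy; apply H; [now left | now right].
Qed.

Lemma pair_count_or Q1 Q2 s :
  (pair_count (fun x y => Q1 x y \/ Q2 x y) s <= pair_count Q1 s + pair_count Q2 s)%nat.
Proof.
  induction s as [|x s IH]; [cbn; lia|]; simpl.
  pose proof (pcount_or (Q1 x) (Q2 x) s); lia.
Qed.

Lemma pair_count_exists_le (Q : nat -> point -> point -> Prop) s r m :
  (forall j, (j <= r)%nat -> INR (pair_count (Q j) s) <= m) ->
  INR (pair_count (fun x y => exists j, (j <= r)%nat /\ Q j x y) s) <= (INR r + 1) * m.
Proof.
  induction r as [|r IH]; intro H.
  - eapply Rle_trans; [apply le_INR, pair_count_mono | rewrite Rplus_0_l, Rmult_1_l; now apply H].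
    intros x y _ _ [j [Hj HQ]]; now replace j with 0%nat in HQ by lia.
  - assert (Hle : (pair_count (fun x y => exists j, (j <= S r)%nat /\ Q j x y) s <=
                   pair_count (Q (S r)) s +
                   pair_count (fun x y => exists j, (j <= r)%nat /\ Q j x y) s)%nat).
    { eapply Nat.le_trans; [apply pair_count_mono | apply pair_count_or].
      intros x y _ _ [j [Hj HQ]]; destruct (Nat.eq_dec j (S r)) as [->|]; [now left|].
      right; exists j; split; [lia | exact HQ]. }
    apply le_INR in Hle; rewrite plus_INR in Hle.
    specialize (IH (fun j Hj => H j (le_S _ _ Hj))); specialize (H (S r) (le_n _)).
    rewrite S_INR; lra.
Qed.

Lemma pair_count_row_le (Q : point -> point -> Prop) s m :
  (forall x, In x s -> INR (pcount (Q x) s) <= m) ->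
  INR (pair_count Q s) <= INR (length s) * m.
Proof.
  induction s as [|x s IH]; intros H; [simpl; lra|].
  simpl pair_count; simpl length; rewrite plus_INR, S_INR.
  assert (Hrow : forall y, In y (x :: s) -> INR (pcount (Q y) s) <= m).
  { intros y Hy; eapply Rle_trans; [apply le_INR, pcount_cons_le | exact (H y Hy)]. }
  pose proof (Hrow x (or_introl eq_refl)).
  pose proof (IH (fun y Hy => Hrow y (or_intror Hy))); lra.
Qed.

Lemma pair_count_fst_le (A : point -> Prop) s :
  INR (pair_count (fun x _ => A x) s) <= INR (pcount A s) * INR (length s).
Proof.
  induction s as [|x s IH]; [simpl; lra|].
  simpl pair_count; simpl length; rewrite plus_INR, S_INR.
  pose proof (pos_INR (pcount A s)); pose proof (pos_INR (length s)).
  destruct (classic (A x)) as [h|h].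
  - rewrite pcount_cons_in, S_INR by exact h.
    pose proof (le_INR _ _ (pcount_le_length (fun _ => A x) s)); nra.
  - rewrite pcount_cons_out, pcount_eq0 by auto; simpl INR; nra.
Qed.

Lemma pair_count_snd_le (A : point -> Prop) s :
  INR (pair_count (fun _ y => A y) s) <= INR (length s) * INR (pcount A s).
Proof. apply pair_count_row_le; intros; apply Rle_refl. Qed.

Definition increasing_lines (ys : list R) : Prop :=
  forall i, (i + 1 < length ys)%nat -> nth i ys 0 < nth (i + 1) ys 0.

Section Slabs.

Variable ys : list R.
Hypothesis ys_incr : increasing_lines ys.

Lemma increasing_lines_nth_le i j :
  (i <= j)%nat -> (j < length ys)%nat -> nth i ys 0 <= nth j ys 0.
Proof.
  induction j as [|j IH]; intros Hij Hj; [now replace i with 0%nat by lia; lra|].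
  destruct (Nat.eq_dec i (S j)) as [->|]; [lra|].
  pose proof (IH ltac:(lia) ltac:(lia)); pose proof (ys_incr j ltac:(lia)).
  replace (S j) with (j + 1)%nat by lia; lra.
Qed.

Lemma in_slab_lt_line i j p : in_slab ys i p -> (i <= j)%nat -> (j < length ys)%nat ->
  fst p < nth j ys 0.
Proof.
  intros [_ [Hi|Hi]] Hij Hj; [lia|].
  pose proof (increasing_lines_nth_le i j Hij Hj); lra.
Qed.

Lemma in_slab_gt_line i j p : in_slab ys i p -> (j < i)%nat -> (i <= length ys)%nat ->
  nth j ys 0 < fst p.
Proof.
  intros [[Hi|Hi] _] Hji Hi'; [lia|].
  pose proof (increasing_lines_nth_le j (i - 1) ltac:(lia) ltac:(lia)); lra.
Qed.

Lemma in_slab_unique p i j : in_slab ys i p -> in_slab ys j p ->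
  (i <= length ys)%nat -> (j <= length ys)%nat -> i = j.
Proof.
  intros Hi Hj Hil Hjl.
  destruct (lt_eq_lt_dec i j) as [[h|h]|h]; [exfalso| exact h | exfalso].
  - pose proof (in_slab_lt_line i i p Hi (le_n _) ltac:(lia)).
    pose proof (in_slab_gt_line j i p Hj h Hjl); lra.
  - pose proof (in_slab_lt_line j j p Hj (le_n _) ltac:(lia)).
    pose proof (in_slab_gt_line i j p Hi h Hil); lra.
Qed.

Lemma in_slab_exists p : (forall y, In y ys -> fst p <> y) ->
  exists i, (i <= length ys)%nat /\ in_slab ys i p.
Proof.
  intro Hoff.
  enough (Hsweep : forall d k, (k + d = length ys)%nat ->
            (k = 0%nat \/ nth (k - 1) ys 0 < fst p) ->
            exists i, (i <= length ys)%nat /\ in_slab ys i p)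
    by (apply (Hsweep (length ys) 0%nat); auto).
  induction d as [|d IH]; intros k Hk Hleft.
  - exists k; split; [lia | split; [exact Hleft | left; lia]].
  - destruct (Rlt_or_le (fst p) (nth k ys 0)) as [h|h].
    + exists k; split; [lia | split; [exact Hleft | now right]].
    + assert (fst p <> nth k ys 0) by (apply Hoff, nth_In; lia).
      apply (IH (S k)); [lia | right; replace (S k - 1)%nat with k by lia; lra].
Qed.

Lemma segment_hits_x (u v X : R) : u < X < v \/ v < X < u ->
  exists t, 0 <= t <= 1 /\ (1 - t) * u + t * v = X.
Proof.
  intro H; assert (Hd : v - u <> 0) by lra.
  set (t := (X - u) / (v - u)).
  assert (Ht : t * (v - u) = X - u) by (unfold t; field; exact Hd).
  exists t; split; [destruct H; split; nra | lra].
Qed.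

Lemma crosses_between x y a b j : in_slab ys a x -> in_slab ys b y ->
  (a <= length ys)%nat -> (b <= length ys)%nat ->
  (a < j < b)%nat \/ (b < j < a)%nat -> crosses ys j x y.
Proof.
  intros Hx Hy Ha Hb Hj.
  assert (Hline : nth (j - 1) ys 0 < nth j ys 0)
    by (replace j with (j - 1 + 1)%nat at 2 by lia; apply ys_incr; lia).
  set (X := (nth (j - 1) ys 0 + nth j ys 0) / 2).
  split; [|split].
  - destruct (segment_hits_x (fst x) (fst y) X) as [t [Ht HX]].
    { destruct Hj; [left | right].
      - pose proof (in_slab_lt_line a (j - 1) x Hx ltac:(lia) ltac:(lia)).
        pose proof (in_slab_gt_line b j y Hy ltac:(lia) Hb); unfold X; lra.
      - pose proof (in_slab_lt_line b (j - 1) y Hy ltac:(lia) ltac:(lia)).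
        pose proof (in_slab_gt_line a j x Hx ltac:(lia) Ha); unfold X; lra. }
    exists t; split; [exact Ht|]; unfold in_slab; cbn [fst]; rewrite HX.
    unfold X; split; right; lra.
  - intro H; pose proof (in_slab_unique x a j Hx H Ha ltac:(lia)); lia.
  - intro H; pose proof (in_slab_unique y b j Hy H Hb ltac:(lia)); lia.
Qed.

End Slabs.

Definition slab_size (ys : list R) (s : list point) (j : nat) : nat := pcount (in_slab ys j) s.

Definition crossing_count (ys : list R) (Pi : point -> point -> Prop) (s : list point)
    (j : nat) : nat :=
  pair_count (fun p q => Pi p q /\ crosses ys j p q) s.

Section NoMiddleSlab.

Variables (ys : list R) (s : list point) (Pi : point -> point -> Prop) (m0 M B : R).
Hypothesis ys_incr : increasing_lines ys.
Hypothesis s_off_lines : forall x y, In x s -> In y ys -> fst x <> y.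
Hypothesis m0_ge0 : 0 <= m0.
Hypothesis B_ge0 : 0 <= B.
Hypothesis slab_size_le : forall j, (j <= length ys)%nat -> INR (slab_size ys s j) <= M.
Hypothesis heavy_crossing_le : forall j, (j <= length ys)%nat ->
  m0 <= INR (slab_size ys s j) -> INR (crossing_count ys Pi s j) <= B.

Let heavy j := (j <= length ys)%nat /\ m0 <= INR (slab_size ys s j).
Let light_point x := exists j, (j <= length ys)%nat /\ ~ heavy j /\ in_slab ys j x.
Let adjacent_heavy a b :=
  heavy a /\ heavy b /\ ~ (exists j, heavy j /\ ((a < j < b)%nat \/ (b < j < a)%nat)).
Let near x y := exists a b, adjacent_heavy a b /\ in_slab ys a x /\ in_slab ys b y.
Let crosses_heavy x y := exists j, (j <= length ys)%nat /\ (heavy j /\ Pi x y /\ crosses ys j x y).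

Lemma pair_count_light_le :
  INR (pair_count (fun x y => light_point x \/ light_point y) s) <=
  2 * ((INR (length ys) + 1) * m0) * INR (length s).
Proof.
  assert (Hlight : INR (pcount light_point s) <= (INR (length ys) + 1) * m0).
  { apply (pcount_exists_le (fun j x => ~ heavy j /\ in_slab ys j x)); intros j Hj.
    destruct (classic (heavy j)) as [hj|hj].
    - rewrite pcount_eq0 by tauto; simpl; exact m0_ge0.
    - assert (Hsmall : INR (slab_size ys s j) < m0)
        by (apply Rnot_le_lt; intro; apply hj; split; assumption).
      assert (Hle : (pcount (fun x => ~ heavy j /\ in_slab ys j x) s <= slab_size ys s j)%nat)
        by (apply pcount_mono; tauto).
      apply le_INR in Hle; lra. }
  pose proof (le_INR _ _ (pair_count_or (fun x _ => light_point x) (fun _ y => light_point y) s))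
    as Hor.
  rewrite plus_INR in Hor.
  pose proof (pair_count_fst_le light_point s); pose proof (pair_count_snd_le light_point s).
  pose proof (pos_INR (length s)); nra.
Qed.

Lemma M_ge0 : 0 <= M.
Proof. eapply Rle_trans; [apply pos_INR | apply (slab_size_le 0%nat); lia]. Qed.

Lemma pcount_in_unique_slab_le (S : nat -> Prop) :
  (forall b b', S b -> S b' -> b = b') -> (forall b, S b -> (b <= length ys)%nat) ->
  INR (pcount (fun y => exists b, S b /\ in_slab ys b y) s) <= M.
Proof.
  intros Huniq Hrange.
  destruct (classic (exists b, S b)) as [[b0 Hb0]|Hnone].
  - eapply Rle_trans; [apply le_INR, pcount_mono | exact (slab_size_le b0 (Hrange b0 Hb0))].
    intros y _ [b [Hb Hy]]; now rewrite (Huniq b b0 Hb Hb0) in Hy.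
  - rewrite pcount_eq0; [apply M_ge0 |].
    intros y _ [b [Hb _]]; apply Hnone; now exists b.
Qed.

Lemma pcount_near_le x : In x s -> INR (pcount (near x) s) <= 3 * M.
Proof.
  intro Hx.
  destruct (in_slab_exists ys x (fun z => s_off_lines x z Hx)) as [a [Ha Hxa]].
  set (above y := exists b, (adjacent_heavy a b /\ (a < b)%nat) /\ in_slab ys b y).
  set (below y := exists b, (adjacent_heavy a b /\ (b < a)%nat) /\ in_slab ys b y).
  assert (Hcover : (pcount (near x) s <=
                    pcount (fun y => in_slab ys a y \/ (above y \/ below y)) s)%nat).
  { apply pcount_mono; intros y _ [a' [b [Hab [Hxa' Hyb]]]].
    assert (a' = a) as -> by (apply (in_slab_unique ys ys_incr x); try assumption; apply Hab).
    destruct (lt_eq_lt_dec a b) as [[h|<-]|h]; [right; left | now left | right; right];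
      exists b; exact (conj (conj Hab h) Hyb). }
  pose proof (pcount_or (in_slab ys a) (fun y => above y \/ below y) s).
  pose proof (pcount_or above below s).
  assert (Hsum : (pcount (near x) s <=
                  pcount (in_slab ys a) s + (pcount above s + pcount below s))%nat) by lia.
  apply le_INR in Hsum; rewrite !plus_INR in Hsum.
  assert (Hrange : forall b, adjacent_heavy a b -> (b <= length ys)%nat)
    by (intros b Hb; apply Hb).
  assert (Habove : INR (pcount above s) <= M).
  { apply pcount_in_unique_slab_le; [|intros b Hb; apply Hrange, Hb].
    intros b b' [[_ [Hb Hbetween]] Hab] [[_ [Hb' Hbetween']] Hab'].
    destruct (lt_eq_lt_dec b b') as [[h|h]|h]; [exfalso | exact h | exfalso].
    - apply Hbetween'; exists b; split; [exact Hb | lia].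
    - apply Hbetween; exists b'; split; [exact Hb' | lia]. }
  assert (Hbelow : INR (pcount below s) <= M).
  { apply pcount_in_unique_slab_le; [|intros b Hb; apply Hrange, Hb].
    intros b b' [[_ [Hb Hbetween]] Hab] [[_ [Hb' Hbetween']] Hab'].
    destruct (lt_eq_lt_dec b b') as [[h|h]|h]; [exfalso | exact h | exfalso].
    - apply Hbetween; exists b'; split; [exact Hb' | lia].
    - apply Hbetween'; exists b; split; [exact Hb | lia]. }
  pose proof (slab_size_le a Ha); unfold slab_size in *; lra.
Qed.

Lemma pair_count_crosses_heavy_le :
  INR (pair_count crosses_heavy s) <= (INR (length ys) + 1) * B.
Proof.
  apply (pair_count_exists_le (fun j x y => heavy j /\ Pi x y /\ crosses ys j x y)).
  intros j Hj; destruct (classic (heavy j)) as [hj|hj].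
  - eapply Rle_trans; [apply le_INR, pair_count_mono | exact (heavy_crossing_le j Hj (proj2 hj))].
    intros x y _ _ [_ H]; exact H.
  - rewrite pair_count_eq0 by tauto; simpl; exact B_ge0.
Qed.

Lemma edge_classification x y : In x s -> In y s -> Pi x y ->
  ((light_point x \/ light_point y) \/ near x y) \/ crosses_heavy x y.
Proof.
  intros Hx Hy Hxy.
  destruct (in_slab_exists ys x (fun z => s_off_lines x z Hx)) as [a [Ha Hxa]].
  destruct (in_slab_exists ys y (fun z => s_off_lines y z Hy)) as [b [Hb Hyb]].
  destruct (classic (heavy a)) as [ha|ha]; [| left; left; left; now exists a].
  destruct (classic (heavy b)) as [hb|hb]; [| left; left; right; now exists b].
  destruct (classic (exists j, heavy j /\ ((a < j < b)%nat \/ (b < j < a)%nat)))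
    as [[j [hj Hj]]|Hnone].
  - right; exists j; split; [apply hj|].
    exact (conj hj (conj Hxy (crosses_between ys ys_incr x y a b j Hxa Hyb Ha Hb Hj))).
  - left; right; exists a, b; exact (conj (conj ha (conj hb Hnone)) (conj Hxa Hyb)).
Qed.

Lemma pair_count_le_of_no_middle_slab :
  INR (pair_count Pi s) <=
  2 * ((INR (length ys) + 1) * m0) * INR (length s) + INR (length s) * (3 * M) +
  (INR (length ys) + 1) * B.
Proof.
  assert (Hsplit : (pair_count Pi s <=
            pair_count (fun x y => light_point x \/ light_point y) s + pair_count near s +
            pair_count crosses_heavy s)%nat).
  { eapply Nat.le_trans; [apply pair_count_mono, edge_classification|].
    eapply Nat.le_trans; [apply pair_count_or|].
    pose proof (pair_count_or (fun x y => light_point x \/ light_point y) near s); lia. }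
  apply le_INR in Hsplit; rewrite !plus_INR in Hsplit.
  pose proof pair_count_light_le; pose proof pair_count_crosses_heavy_le.
  pose proof (pair_count_row_le near s (3 * M) pcount_near_le); lra.
Qed.

End NoMiddleSlab.

Lemma slab_size_lt_of_not_crowded P ys K e s j :
  ~ crowded P ys K e -> NoDup s -> incl s P -> (forall p, In p s -> K p) ->
  (j <= length ys)%nat -> INR (slab_size ys s j) < e * INR (length P).
Proof.
  intros Hnc Hnd Hincl HK Hj; apply Rnot_le_lt; intro Hbig; apply Hnc.
  exists j; split; [exact Hj|].
  exists (filter (fun p => decP (in_slab ys j p)) s); split; [|split; [|split]].
  - now apply NoDup_filter.
  - intros p Hp; apply filter_In in Hp; now apply Hincl.
  - intros p Hp; apply filter_In in Hp; split; [now apply HK | now apply decPE].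
  - now apply Rle_ge.
Qed.

Lemma ceil_nat_ge x : 0 < x -> x <= INR (ceil_nat x).
Proof.
  intro Hx; unfold ceil_nat, ceilZ.
  destruct (base_Int_part (- x)) as [Hfloor _].
  assert (Hceil : x <= IZR (- Int_part (- x))) by (rewrite opp_IZR; lra).
  rewrite INR_IZR_INZ, Z2Nat.id; [exact Hceil|].
  apply le_IZR; lra.
Qed.

Lemma edge_budget_lt sigma eps nR rR kR :
  0 < sigma <= 1 -> 1 <= rR -> 100 <= eps * nR <= kR ->
  2 * ((rR + 1) * (sigma * eps / (100 * rR) * nR)) * kR +
  kR * (3 * (1 / 100 * sigma * eps * nR)) +
  (rR + 1) * (1 / 100 * sigma * eps ^ 2 * nR ^ 2 / rR) <
  sigma / 2 * (kR * (kR - 1) / 2).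
Proof.
  intros Hsig Hr HX.
  set (X := eps * nR) in HX.
  assert (Hfrac : 0 < (rR + 1) / rR <= 2).
  { replace ((rR + 1) / rR) with (1 + / rR) by (field; lra).
    pose proof (Rinv_0_lt_compat rR ltac:(lra)).
    pose proof (Rinv_le_contravar 1 rR ltac:(lra) Hr); rewrite Rinv_1 in *; lra. }
  replace (2 * ((rR + 1) * (sigma * eps / (100 * rR) * nR)) * kR +
           kR * (3 * (1 / 100 * sigma * eps * nR)) +
           (rR + 1) * (1 / 100 * sigma * eps ^ 2 * nR ^ 2 / rR))
    with (sigma / 100 * (2 * X * kR * ((rR + 1) / rR) + 3 * X * kR + X ^ 2 * ((rR + 1) / rR)))
    by (unfold X; field; lra).
  assert (Hsum : 2 * X * kR * ((rR + 1) / rR) + 3 * X * kR + X ^ 2 * ((rR + 1) / rR)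
                 <= 9 * kR ^ 2).
  { assert (HXk : 0 <= X * kR <= kR ^ 2) by (split; nra).
    assert (HX2 : 0 <= X ^ 2 <= kR ^ 2) by (split; nra).
    nra. }
  assert (Hmargin : 0 < sigma * kR * (16 * kR - 25))
    by (apply Rmult_lt_0_compat; [apply Rmult_lt_0_compat|]; lra).
  pose proof (Rmult_le_compat_l sigma _ _ ltac:(lra) Hsum); nra.
Qed.

Theorem mainTheorem5 :
  exists C0 c N0 : R, 0 < C0 < 1/4 /\ 0 < c /\ 0 < N0 /\
  forall (P : list point) (n : nat) (eps sigma : R) (r0 : nat)
         (Pi : point -> point -> Prop) (ys : list R)
         (K : point -> Prop) (PK : list point),
    NoDup P -> length P = n -> general_position P ->
    0 < eps < 1 -> eps * INR n >= N0 ->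
    0 < sigma <= 1 ->
    (1 <= r0)%nat ->
    (forall p q, Pi p q -> Pi q p) ->
    (forall p q, Pi p q -> In p P /\ In q P /\ p <> q) ->
    slab_system P r0 ys ->
    convex K ->
    restricted_witness P Pi K eps (sigma / 2) PK ->
    ~ crowded P ys K (C0 * sigma * eps) ->
    let eps0 := sigma * eps / (100 * INR r0) in
    exists i : nat, (i <= r0)%nat /\
      eps0 * INR n <= INR (pcount (in_slab ys i) PK) <= C0 * sigma * eps * INR n /\
      INR (pair_count (fun p q => Pi p q /\ crosses ys i p q) PK)
        >= c * sigma * eps ^ 2 * INR n ^ 2 / INR r0.
Proof.
  exists (1/100), (1/100), 100; split; [lra|]; split; [lra|]; split; [lra|].
  intros P n eps sigma r0 Pi ys K PK _ <- _ Heps HN Hsig Hr0 _ _ [<- [Hsorted [Hoff _]]] _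
    [HndK [HinclK [HK [HlenK Hdense]]]] Hnc eps0.
  assert (Hr : 1 <= INR (length ys)) by (apply (le_INR 1); exact Hr0).
  assert (Hslab_small : forall j, (j <= length ys)%nat ->
            INR (slab_size ys PK j) <= 1/100 * sigma * eps * INR (length P))
    by (intros j Hj; apply Rlt_le; eapply slab_size_lt_of_not_crowded; eauto).
  apply NNPP; intro Hno.
  assert (Hcross_small : forall j, (j <= length ys)%nat ->
            eps0 * INR (length P) <= INR (slab_size ys PK j) ->
            INR (crossing_count ys Pi PK j) <=
            1/100 * sigma * eps ^ 2 * INR (length P) ^ 2 / INR (length ys)).
  { intros j Hj Hheavy; apply Rnot_lt_le; intro Hmany; apply Hno.
    exists j; split; [exact Hj|]; split; [split; [exact Hheavy | now apply Hslab_small]|].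
    now apply Rle_ge, Rlt_le. }
  assert (Hm0 : 0 <= eps0 * INR (length P)).
  { apply Rmult_le_pos; [apply Rlt_le; unfold eps0; apply Rdiv_lt_0_compat; nra | apply pos_INR]. }
  assert (HB : 0 <= 1/100 * sigma * eps ^ 2 * INR (length P) ^ 2 / INR (length ys)).
  { pose proof (pos_INR (length P)).
    apply Rmult_le_pos; [|apply Rlt_le, Rinv_0_lt_compat; lra].
    repeat apply Rmult_le_pos; try apply pow_le; lra. }
  pose proof (pair_count_le_of_no_middle_slab ys PK Pi _ _ _ (fun i Hi => Hsorted i ltac:(lia))
                (fun x y Hx => Hoff x y (HinclK x Hx)) Hm0 HB Hslab_small Hcross_small)
    as Hedges.
  assert (Hk : 100 <= eps * INR (length P) <= INR (length PK))
    by (rewrite HlenK; split; [|apply ceil_nat_ge]; lra).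
  pose proof (edge_budget_lt sigma eps (INR (length P)) (INR (length ys)) _ Hsig Hr Hk).
  unfold binom2 in Hdense; rewrite <- HlenK in Hdense.
  unfold eps0 in Hedges; lra.
Qed.
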